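(* Let $\beta>0$, set $\alpha=1/\beta$, and let $m,n\ge 1$ be integers and $\mathbf{M}$ a real $m\times n$ matrix. Let $\mathbf{x}^{n,\beta}\in\mathbb{H}^{n,\beta}$ and let $\mathbf{x}^{n,\alpha}=p_{\mathbb{H}^{n,\beta}\to\mathbb{D}^{n,\alpha}}(\mathbf{x}^{n,\beta})\in\mathbb{D}^{n,\alpha}$ be the same point of hyperbolic space represented in the Poincar\'e ball model. Then the Lorentzian matrix-vector multiplication and the M\''obius matrix-vector multiplication are equivalent, i.e. $$p_{\mathbb{H}^{m,\beta}\to\mathbb{D}^{m,\alpha}}\big(\mathbf{M}\otimes^{\beta}\mathbf{x}^{n,\beta}\big)=\mathbf{M}\otimes^{\alpha}\mathbf{x}^{n,\alpha}.$$
   Context: Lorentzian scalar product on $\mathbb{R}^{n+1}$: $\langle \mathbf{x},\mathbf{y}\rangle_{\mathcal{L}}=-x_0y_0+\sum_{i=1}^n x_iy_i$, and $\|\mathbf{v}\|_{\mathcal{L}}=\sqrt{\langle\mathbf{v},\mathbf{v}\rangle_{\mathcal{L}}}$. Hyperboloid model: $\mathbb{H}^{n,\beta}=\{\mathbf{x}\in\mathbb{R}^{n+1}:\langle\mathbf{x},\mathbf{x}\rangle_{\mathcal{L}}=-\beta,\ x_0>0\}$, with origin $\mathbf{0}=(\sqrt{\beta},0,\dots,0)$ and tangent space $\mathcal{T}_{\mathbf{0}}\mathbb{H}^{n,\beta}=\{\mathbf{v}:\langle\mathbf{v},\mathbf{0}\rangle_{\mathcal{L}}=0\}=\{\mathbf{v}:v_0=0\}$.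 Intrinsic distance $d^\beta_{\mathbb{H}}(\mathbf{x},\mathbf{y})=\sqrt{\beta}\,\mathrm{arcosh}(-\langle\mathbf{x},\mathbf{y}\rangle_{\mathcal{L}}/\beta)$. Exponential map at the origin: for $\mathbf{v}\in\mathcal{T}_{\mathbf{0}}\mathbb{H}^{n,\beta}$, $\mathbf{v}\neq 0$, $\exp^\beta_{\mathbf{0}}(\mathbf{v})=\cosh(\|\mathbf{v}\|_{\mathcal{L}}/\sqrt{\beta})\mathbf{0}+\sqrt{\beta}\sinh(\|\mathbf{v}\|_{\mathcal{L}}/\sqrt{\beta})\,\mathbf{v}/\|\mathbf{v}\|_{\mathcal{L}}$, and $\exp^\beta_{\mathbf{0}}(0)=\mathbf{0}$. Logarithmic map at the origin: for $\mathbf{y}\in\mathbb{H}^{n,\beta}$, $\mathbf{y}\ne\mathbf{0}$, $\log^\beta_{\mathbf{0}}(\mathbf{y})=d^\beta_{\mathbb{H}}(\mathbf{0},\mathbf{y})\,\frac{\mathbf{y}+\frac1\beta\langle\mathbf{0},\mathbf{y}\rangle_{\mathcal{L}}\mathbf{0}}{\|\mathbf{y}+\frac1\beta\langle\mathbf{0},\mathbf{y}\rangle_{\mathcal{L}}\mathbf{0}\|_{\mathcal{L}}}$, and $\log^\beta_{\mathbf{0}}(\mathbf{0})=0$. Lorentzian matrix-vector multiplication: for $\mathbf{x}\in\mathbb{H}^{n,\beta}$, writing $\log^\beta_{\mathbf{0}}(\mathbf{x})=(v_0,v_1,\dots,v_n)$, set $\hat{\mathbf{M}}(\mathbf{v})=(0,\mathbf{M}(v_1,\dots,v_n)^T)\in\mathbb{R}^{m+1}$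 and $\mathbf{M}\otimes^\beta\mathbf{x}=\exp^\beta_{\mathbf{0}}(\hat{\mathbf{M}}(\log^\beta_{\mathbf{0}}(\mathbf{x})))\in\mathbb{H}^{m,\beta}$ (exponential map of $\mathbb{H}^{m,\beta}$). Poincar\'e ball model: $\mathbb{D}^{n,\alpha}=\{\mathbf{x}\in\mathbb{R}^n:\alpha\|\mathbf{x}\|^2<1\}$ (Euclidean norm). M\''obius matrix-vector multiplication: $\mathbf{M}\otimes^\alpha\mathbf{x}=\frac{1}{\sqrt{\alpha}}\tanh\!\Big(\frac{\|\mathbf{M}\mathbf{x}\|}{\|\mathbf{x}\|}\tanh^{-1}(\sqrt{\alpha}\|\mathbf{x}\|)\Big)\frac{\mathbf{M}\mathbf{x}}{\|\mathbf{M}\mathbf{x}\|}$ for $\mathbf{M}\mathbf{x}\neq 0$, and $=0$ if $\mathbf{M}\mathbf{x}=0$. Isometry between models: $p_{\mathbb{H}^{n,\beta}\to\mathbb{D}^{n,\alpha}}(x_0,x_1,\dots,x_n)=\frac{\sqrt{\beta}(x_1,\dots,x_n)}{\sqrt{\beta}+x_0}$. *)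

From HB Require Import structures.
From mathcomp Require Import all_boot all_order all_algebra.
From mathcomp Require Import all_classical all_reals.
From mathcomp Require Import sequences exp.
Set Implicit Arguments. Unset Strict Implicit. Unset Printing Implicit Defensive.
Import Order.TTheory GRing.Theory Num.Theory.
Local Open Scope ring_scope.

Section Hyperbolic.
Variable R : realType.

Definition cosh (t : R) : R := (expR t + expR (- t)) / 2.
Definition sinh (t : R) : R := (expR t - expR (- t)) / 2.
Definition tanh (t : R) : R := sinh t / cosh t.
Definition arcosh (t : R) : R := ln (t + Num.sqrt (t ^+ 2 - 1)).
Definition artanh (t : R) : R := ln ((1 + t) / (1 - t)) / 2.

(* Vectors of R^{n+1} are columns 'cV_(1+n): coordinate x_0 is the top
   entry, (x_1,...,x_n) is the bottom block. *)
Definition hd {n} (x : 'cV[R]_(1 + n)) : R := usubmx x 0 0.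
Definition tl {n} (x : 'cV[R]_(1 + n)) : 'cV[R]_n := dsubmx x.

Definition lprod {n} (x y : 'cV[R]_(1 + n)) : R :=
  - (hd x * hd y) + \sum_(i < n) tl x i 0 * tl y i 0.
Definition lnorm {n} (v : 'cV[R]_(1 + n)) : R := Num.sqrt (lprod v v).

Definition hyperboloid (n : nat) (beta : R) (x : 'cV[R]_(1 + n)) : Prop :=
  lprod x x = - beta /\ 0 < hd x.

Definition horigin (n : nat) (beta : R) : 'cV[R]_(1 + n) :=
  col_mx (Num.sqrt beta)%:M 0.

Definition hdist {n} (beta : R) (x y : 'cV[R]_(1 + n)) : R :=
  Num.sqrt beta * arcosh (- lprod x y / beta).

Definition expo {n} (beta : R) (v : 'cV[R]_(1 + n)) : 'cV[R]_(1 + n) :=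
  if v == 0 then horigin n beta
  else cosh (lnorm v / Num.sqrt beta) *: horigin n beta
       + (Num.sqrt beta * sinh (lnorm v / Num.sqrt beta) / lnorm v) *: v.

Definition logo {n} (beta : R) (y : 'cV[R]_(1 + n)) : 'cV[R]_(1 + n) :=
  if y == horigin n beta then 0
  else let w := y + (lprod (horigin n beta) y / beta) *: horigin n beta in
       (hdist beta (horigin n beta) y / lnorm w) *: w.

Definition Mhat {m n} (M : 'M[R]_(m, n)) (v : 'cV[R]_(1 + n)) : 'cV[R]_(1 + m) :=
  col_mx 0 (M *m tl v).
Definition lorentz_mul {m n} (beta : R) (M : 'M[R]_(m, n))
  (x : 'cV[R]_(1 + n)) : 'cV[R]_(1 + m) :=
  expo beta (Mhat M (logo beta x)).

Definition enorm {n} (x : 'cV[R]_n) : R :=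
  Num.sqrt (\sum_(i < n) x i 0 ^+ 2).

Definition pball (n : nat) (alpha : R) (x : 'cV[R]_n) : Prop :=
  alpha * enorm x ^+ 2 < 1.

Definition mobius_mul {m n} (alpha : R) (M : 'M[R]_(m, n)) (x : 'cV[R]_n)
  : 'cV[R]_m :=
  if M *m x == 0 then 0
  else (tanh (enorm (M *m x) / enorm x * artanh (Num.sqrt alpha * enorm x))
        / Num.sqrt alpha / enorm (M *m x)) *: (M *m x).

Definition p_HD {n} (beta : R) (x : 'cV[R]_(1 + n)) : 'cV[R]_n :=
  (Num.sqrt beta / (Num.sqrt beta + hd x)) *: tl x.

End Hyperbolic.

From mathcomp Require Import all_boot all_order all_algebra.
From mathcomp Require Import all_classical all_reals.
From mathcomp Require Import sequences exp.
From mathcomp Require Import ring lra.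
Import Order.TTheory GRing.Theory Num.Theory.
Local Open Scope ring_scope.
Set Implicit Arguments. Unset Strict Implicit.

(* Let b = sqrt beta and write x = (x0, u).  On the hyperboloid x0 = b cosh d and
   |u| = b sinh d with d = arcosh (x0 / b) (x lies at distance b d from the
   origin), so log_0 x = (0, b d u / |u|).  Applying M scales that distance by |M u| / |u|,
   and by the half-angle formula sinh t / (1 + cosh t) = tanh (t / 2) the ball
   image of exp_0 (0, w) is b tanh (|w| / 2b) w / |w|.  On the ball side,
   p x = b u / (b + x0) has norm b tanh (d / 2), so the Mobius product also
   multiplies the half-distance d / 2 by |M u| / |u| in the direction of M u. *)

Section HyperbolicFunctions.
Variable R : realType.

Lemma cosh0 : cosh (0 : R) = 1.
Proof. by rewrite /cosh oppr0 expR0; field. Qed.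

Lemma tanh_half (s : R) : sinh s / (1 + cosh s) = tanh (s / 2).
Proof.
rewrite /tanh /sinh /cosh.
set q := expR (s / 2).
have q_gt0 : 0 < q by apply: expR_gt0.
have -> : expR s = q * q by rewrite -expRD -splitr.
have -> : expR (- s) = (q * q)^-1 by rewrite expRN -expRD -splitr.
have -> : expR (- (s / 2)) = q^-1 by rewrite expRN.
have h1 : q * q + 1 != 0 by rewrite gt_eqF // addr_gt0 // mulr_gt0.
have h2 : q * q * 2 + (q * q * (q * q) + 1) != 0.
  by rewrite gt_eqF // addr_gt0 // ?mulr_gt0 // addr_gt0 // !mulr_gt0.
by field; rewrite gt_eqF // h1 h2.
Qed.

Lemma cosh_gt0 (t : R) : 0 < cosh t.
Proof. by rewrite divr_gt0 // addr_gt0 // expR_gt0. Qed.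

Lemma arcosh_gt0 (t : R) : 1 < t -> 0 < arcosh t.
Proof. by move=> t1; apply: ln_gt0; rewrite -[1]addr0 ltr_leD // sqrtr_ge0. Qed.

(* With [x0 = b cosh d] and [U = b sinh d], both sides equal [d / 2]. *)
Lemma artanh_arcosh_half (b x0 U : R) :
  0 < b -> 0 <= x0 -> 0 <= U -> x0 ^+ 2 = b ^+ 2 + U ^+ 2 ->
  artanh (U / (b + x0)) = arcosh (x0 / b) / 2.
Proof.
move=> b_gt0 x0_ge0 U_ge0 x_sqr.
have bx0_gt0 : 0 < b + x0 by lra.
have U_le_x0 : U <= x0 by rewrite -(ler_pXn2r (isT : (0 < 2)%N)) ?nnegrE // x_sqr lerDr sqr_ge0.
have bxU_neq0 : b + x0 - U != 0 by rewrite gt_eqF //; lra.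
rewrite /artanh /arcosh; congr (ln _ / _).
have -> : (x0 / b) ^+ 2 - 1 = (U / b) ^+ 2.
  by rewrite !expr_div_n x_sqr; field; rewrite gt_eqF // exprn_gt0.
rewrite sqrtr_sqr ger0_norm ?divr_ge0 ?(ltW b_gt0) //.
have -> : (1 + U / (b + x0)) / (1 - U / (b + x0)) = (b + x0 + U) / (b + x0 - U).
  by field; rewrite bxU_neq0 gt_eqF.
rewrite -mulrDl; apply/eqP; rewrite eqr_div ?(gt_eqF b_gt0) //; apply/eqP; lra.
Qed.

End HyperbolicFunctions.

Section EuclideanNorm.
Variable R : realType.
Implicit Types (n : nat) (c : R).

Lemma mobius_mulE m n (alpha : R) (M : 'M[R]_(m, n)) (x : 'cV[R]_n) :
  mobius_mul alpha M x =
  (tanh (enorm (M *m x) / enorm x * artanh (Num.sqrt alpha * enorm x))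
    / Num.sqrt alpha / enorm (M *m x)) *: (M *m x).
Proof. by rewrite /mobius_mul; case: eqP => [->|//]; rewrite scaler0. Qed.

Lemma enorm_ge0 n (u : 'cV[R]_n) : 0 <= enorm u.
Proof. exact: sqrtr_ge0. Qed.

Lemma enorm_sqr n (u : 'cV[R]_n) : enorm u ^+ 2 = \sum_(i < n) u i 0 ^+ 2.
Proof. by rewrite sqr_sqrtr // sumr_ge0 // => i _; rewrite sqr_ge0. Qed.

Lemma enorm_eq0 n (u : 'cV[R]_n) : (enorm u == 0) = (u == 0).
Proof.
have sq_ge0 i : 0 <= u i 0 ^+ 2 by rewrite sqr_ge0.
apply/idP/eqP => [|->]; last by rewrite /enorm big1 ?sqrtr0 // => i _; rewrite mxE expr0n.
rewrite sqrtr_eq0 => sum_le0.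
have sum0 : \sum_(i < n) u i 0 ^+ 2 = 0 by apply/eqP; rewrite eq_le sum_le0 sumr_ge0.
apply/matrixP => i j; rewrite (ord1 j) mxE; apply/eqP; rewrite -sqrf_eq0; apply/eqP.
exact: (psumr_eq0P (fun i _ => sq_ge0 i) sum0).
Qed.

Lemma enorm_gt0 n (u : 'cV[R]_n) : (0 < enorm u) = (u != 0).
Proof. by rewrite lt_def enorm_eq0 enorm_ge0 andbT. Qed.

Lemma enorm0 n : enorm (0 : 'cV[R]_n) = 0.
Proof. by apply/eqP; rewrite enorm_eq0. Qed.

Lemma enormZ n c (u : 'cV[R]_n) : 0 <= c -> enorm (c *: u) = c * enorm u.
Proof.
move=> c0; rewrite /enorm -[X in X * _]ger0_norm // -sqrtr_sqr -sqrtrM ?sqr_ge0 //.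
by rewrite mulr_sumr; congr Num.sqrt; apply: eq_bigr => i _; rewrite mxE exprMn.
Qed.

End EuclideanNorm.

Section LorentzModel.
Variable R : realType.
Implicit Types (n : nat) (beta : R).

Lemma hd_col_mx n (a : 'cV[R]_1) (w : 'cV[R]_n) : hd (col_mx a w) = a 0 0.
Proof. by rewrite /hd col_mxKu. Qed.

Lemma tl_col_mx n (a : 'cV[R]_1) (w : 'cV[R]_n) : tl (col_mx a w) = w.
Proof. by rewrite /tl col_mxKd. Qed.

Lemma col_mx_hd_tl n (x : 'cV[R]_(1 + n)) : x = col_mx (hd x)%:M (tl x).
Proof. by rewrite /hd /tl -mx11_scalar vsubmxK. Qed.

Lemma lprod_col_mx n (a c : 'cV[R]_1) (u v : 'cV[R]_n) :
  lprod (col_mx a u) (col_mx c v) = - (a 0 0 * c 0 0) + \sum_(i < n) u i 0 * v i 0.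
Proof. by rewrite /lprod !hd_col_mx !tl_col_mx. Qed.

Lemma lnorm_tangent n (w : 'cV[R]_n) : lnorm (col_mx 0 w) = enorm w.
Proof.
rewrite /lnorm lprod_col_mx mxE mul0r oppr0 add0r.
by congr Num.sqrt; apply: eq_bigr => i _; rewrite expr2.
Qed.

Lemma hyperboloid_sqr n beta (x : 'cV[R]_(1 + n)) :
  hyperboloid beta x -> hd x ^+ 2 = beta + enorm (tl x) ^+ 2.
Proof.
case=> hx _; rewrite enorm_sqr -[beta]opprK -hx /lprod.
under eq_bigr do rewrite -expr2.
ring.
Qed.

Lemma tl_horigin n beta : tl (horigin n beta) = 0.
Proof. exact: tl_col_mx. Qed.

End LorentzModel.

Section MapsAtOrigin.
Variables (R : realType) (beta : R).
Hypothesis beta_gt0 : 0 < beta.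
Local Notation b := (Num.sqrt beta).

Let b_gt0 : 0 < b. Proof. by rewrite sqrtr_gt0. Qed.

Let mul_sqrt_divE (y : R) : b * y / beta = y / b.
Proof.
(* [b] is generalized first, so that rewriting [beta] does not reach inside [Num.sqrt beta]. *)
have := sqr_sqrtr (ltW beta_gt0); move: b_gt0; move: b => c c_gt0 <-.
by field; rewrite gt_eqF.
Qed.

Lemma expo_tangent n (w : 'cV[R]_n) :
  expo beta (col_mx 0 w) =
  col_mx (b * cosh (enorm w / b))%:M ((b * sinh (enorm w / b) / enorm w) *: w).
Proof.
rewrite /expo col_mx_eq0 eqxx /= lnorm_tangent.
have [->|_] := eqVneq w 0.
  by rewrite enorm0 mul0r cosh0 mulr1 scaler0.
rewrite /horigin scale_col_mx scale_col_mx add_col_mx !scaler0 add0r addr0.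
by rewrite scale_scalar_mx mulrC.
Qed.

Lemma p_HD_col_mx n (a : R) (w : 'cV[R]_n) :
  p_HD beta (col_mx a%:M w) = (b / (b + a)) *: w.
Proof. by rewrite /p_HD hd_col_mx tl_col_mx mxE mulr1n. Qed.

Lemma p_HD_expo_tangent n (w : 'cV[R]_n) :
  p_HD beta (expo beta (col_mx 0 w)) = (b * tanh (enorm w / b / 2) / enorm w) *: w.
Proof.
rewrite expo_tangent p_HD_col_mx scalerA.
have [->|w_neq0] := eqVneq w 0; first by rewrite !scaler0.
have w_gt0 : 0 < enorm w by rewrite enorm_gt0.
have ch_gt0 := cosh_gt0 (enorm w / b).
rewrite -tanh_half; congr (_ *: w).
by field; rewrite !gt_eqF // ?addr_gt0 // mulr_gt0.
Qed.

Lemma logo_hyperboloid n (x : 'cV[R]_(1 + n)) : hyperboloid beta x ->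
  logo beta x = col_mx 0 ((b * arcosh (hd x / b) / enorm (tl x)) *: tl x).
Proof.
move=> hx; have := hyperboloid_sqr hx; have := hx.2.
rewrite /logo (col_mx_hd_tl x) hd_col_mx tl_col_mx mxE mulr1n.
move: (hd x) (tl x) => x0 u x0_gt0 x_sqr.
have [u0|u_neq0] := eqVneq u 0.
  have x0E : x0 = b.
    by rewrite -[x0]ger0_norm ?ltW // -sqrtr_sqr x_sqr u0 enorm0 expr0n addr0.
  by rewrite x0E u0 eqxx scaler0 col_mx0.
have -> : (col_mx x0%:M u == horigin n beta) = false.
  apply/negbTE; apply: contra u_neq0 => /eqP/(congr1 (@tl R n)).
  by rewrite tl_col_mx tl_horigin => ->.
have lp : lprod (horigin n beta) (col_mx x0%:M u) = - (b * x0).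
  rewrite /horigin lprod_col_mx big1 => [|i _]; last by rewrite mxE mul0r.
  by rewrite !mxE !mulr1n addr0.
have -> : col_mx x0%:M u + (lprod (horigin n beta) (col_mx x0%:M u) / beta) *: horigin n beta
          = col_mx 0 u.
  rewrite lp /horigin scale_col_mx add_col_mx scaler0 addr0 scale_scalar_mx -raddfD /=.
  congr col_mx; rewrite [RHS]mx11_scalar mxE; congr _%:M.
  by rewrite mulNr mul_sqrt_divE mulNr divfK ?subrr // gt_eqF.
rewrite lnorm_tangent /hdist lp opprK scale_col_mx scaler0; congr (col_mx 0 (_ *: u)).
by rewrite mul_sqrt_divE.
Qed.

Lemma hyperboloid_hd_gt n (x : 'cV[R]_(1 + n)) :
  hyperboloid beta x -> tl x != 0 -> b < hd x.
Proof.
move=> hx u_neq0; have x0_gt0 := hx.2.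
have : 0 < (hd x - b) * (hd x + b).
  rewrite -subr_sqr (hyperboloid_sqr hx) (sqr_sqrtr (ltW beta_gt0)) addrAC subrr add0r.
  by rewrite exprn_gt0 ?enorm_gt0.
by rewrite pmulr_lgt0 ?subr_gt0 // addr_gt0.
Qed.

Lemma artanh_p_HD n (x : 'cV[R]_(1 + n)) : hyperboloid beta x ->
  artanh (Num.sqrt beta^-1 * enorm (p_HD beta x)) = arcosh (hd x / b) / 2.
Proof.
move=> hx; have x0_gt0 := hx.2.
have bx0_gt0 : 0 < b + hd x by rewrite addr_gt0.
rewrite -(artanh_arcosh_half b_gt0 (ltW x0_gt0) (enorm_ge0 (tl x))); last first.
  by rewrite sqr_sqrtr ?ltW // -hyperboloid_sqr.
rewrite sqrtrV ?ltW // /p_HD enormZ ?divr_ge0 ?ltW //; congr artanh.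
by field; rewrite !gt_eqF.
Qed.

End MapsAtOrigin.

Theorem theorem3p1 (R : realType) (beta : R) (m n : nat)
  (M : 'M[R]_(m, n)) (x : 'cV[R]_(1 + n)) :
  0 < beta -> (1 <= m)%N -> (1 <= n)%N ->
  @hyperboloid R n beta x ->
  let alpha := beta^-1 in
  p_HD beta (lorentz_mul beta M x) = mobius_mul alpha M (p_HD beta x).
Proof.
move=> beta_gt0 _ _ hx alpha.
rewrite /lorentz_mul (logo_hyperboloid beta_gt0 hx) /Mhat tl_col_mx -scalemxAr.
rewrite p_HD_expo_tangent // mobius_mulE (artanh_p_HD beta_gt0 hx) /p_HD -scalemxAr.
set b := Num.sqrt beta; set u := tl x; set d := arcosh (hd x / b).
have [->|v_neq0] := eqVneq (M *m u) 0; first by rewrite !scaler0.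
have u_neq0 : u != 0 by apply: contra_neq v_neq0 => ->; rewrite mulmx0.
have b_gt0 : 0 < b by rewrite sqrtr_gt0.
have b_lt_x0 : b < hd x := hyperboloid_hd_gt beta_gt0 hx u_neq0.
have d_gt0 : 0 < d by rewrite arcosh_gt0 // ltr_pdivlMr // mul1r.
have U_gt0 : 0 < enorm u by rewrite enorm_gt0.
have V_gt0 : 0 < enorm (M *m u) by rewrite enorm_gt0.
have x0_gt0 := hx.2.
rewrite !enormZ ?divr_ge0 ?mulr_ge0 ?ltW ?addr_gt0 //.
rewrite /alpha sqrtrV ?(ltW beta_gt0) // -/b !scalerA; congr (_ *: _).
set U := enorm u; set V := enorm (M *m u); set c := b / (b + hd x).
have c_gt0 : 0 < c by rewrite divr_gt0 ?addr_gt0.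
have -> : b * d / U * V / b / 2 = c * V / (c * U) * (d / 2).
  by field; rewrite !gt_eqF.
by field; rewrite !gt_eqF.
Qed.
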